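(* Let $\nu_n$ and $\nu_n'$ be two neighborhood systems on $N_n$ such that $\nu_n$ is weakly finer than $\nu_n'$, i.e. $\nu_n(i)\subset\nu_n'(i)$ for every $i\in N_n$. Suppose that $\nu_n$ is undirected, and that a triangular array of sub-$\sigma$-fields $\{\mathcal{F}_i\}_{i\in N_n}$ of $\mathcal{F}$ is CND with respect to $(\nu_n,\mathcal{M})$ for some array of sub-$\sigma$-fields $\mathcal{M}=\{\mathcal{M}_i\}_{i\in N_n}$. Then $\{\mathcal{F}_i\}_{i\in N_n}$ is CND with respect to $(\nu_n',\mathcal{M})$.
   Context: Let $(\Omega,\mathcal{F},P)$ be a probability space and $N_n$ a finite set with $|N_n|=n$. A neighborhood system on $N_n$ is a map $\nu_n:N_n\to 2^{N_n}$ with $i\notin\nu_n(i)$ for all $i\in N_n$. It is undirected if $i\in\nu_n(j)$ implies $j\in\nu_n(i)$ for all $i,j\in N_n$. For $A\subset N_n$ let $\bar\nu_n(A)=\left(\bigcup_{i\in A}\nu_n(i)\right)\cup A$ and $\nu_n(A)=\bar\nu_n(A)\setminus A$. For an array of sub-$\sigma$-fields $\{\mathcal{M}_i\}_{i\in N_n}$ and $A\subset N_n$, $\mathcal{M}_A$ denotes the smallest $\sigma$-field containing all $\mathcal{M}_i$, $i\in A$ (the trivial $\sigma$-field if $A=\varnothing$); the same notation is used for other arrays (e.g. $\mathcal{F}_A$), and $\mathcal{G}_1\vee\mathcal{G}_2$ denotes the smallest $\sigma$-field containing $\mathcal{G}_1$ and $\mathcal{G}_2$. Definition (CND): given a neighborhood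 system $\nu_n$ and $\mathcal{M}=\{\mathcal{M}_i\}_{i\in N_n}$, the $\sigma$-fields $\{\mathcal{F}_i\}_{i\in N_n'}$ for a subset $N_n'\subset N_n$ are conditionally neighborhood dependent (CND) with respect to $(\nu_n,\mathcal{M})$ if for any $A,B\subset N_n'$ with $A\subset N_n'\setminus\bar\nu_n(B)$ and $B\subset N_n'\setminus\bar\nu_n(A)$, the $\sigma$-fields $\mathcal{F}_A\vee\mathcal{M}_A$ and $\mathcal{F}_B\vee\mathcal{M}_B$ are conditionally independent given $\mathcal{M}_{\nu_n(A)}$. Here $N_n'=N_n$. *)

From HB Require Import structures.
From mathcomp Require Import all_boot all_order all_algebra.
From mathcomp Require Import all_classical all_reals all_analysis.
Set Implicit Arguments. Unset Strict Implicit. Unset Printing Implicit Defensive.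
Import Order.TTheory GRing.Theory Num.Theory.
Local Open Scope classical_set_scope.
Local Open Scope ring_scope.

(** Neighborhood systems on a finite index set I (playing the role of N_n). *)
Definition nbhd_system (I : finType) (nu : I -> {set I}) : Prop :=
  forall i, i \notin nu i.

Definition undirected (I : finType) (nu : I -> {set I}) : Prop :=
  forall i j, i \in nu j -> j \in nu i.

Definition nbar (I : finType) (nu : I -> {set I}) (A : {set I}) : {set I} :=
  (\bigcup_(i in A) nu i) :|: A.
Definition nbd (I : finType) (nu : I -> {set I}) (A : {set I}) : {set I} :=
  nbar nu A :\: A.

Definition sub_sigma (d : measure_display) (T : measurableType d)
  (G : set (set T)) : Prop :=
  sigma_algebra setT G /\ G `<=` measurable.

(** M_A : smallest sigma-field containing all M_i, i in A (trivial if A empty). *)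
Definition sig_of (T : Type) (I : finType) (M : I -> set (set T)) (A : {set I})
  : set (set T) :=
  <<s \bigcup_(i in [set i | i \in A]) M i >>.

Definition sig_join (T : Type) (G1 G2 : set (set T)) : set (set T) :=
  <<s G1 `|` G2 >>.

Definition sub_measurable (d : measure_display) (T : measurableType d)
  (R : realType) (H : set (set T)) (f : T -> R) : Prop :=
  forall B : set R, measurable B -> H (f @^-1` B).

Definition cond_prob_version (d : measure_display) (T : measurableType d)
  (R : realType) (P : probability T R) (H : set (set T)) (A : set T)
  (f : T -> R) : Prop :=
  [/\ sub_measurable H f,
      P.-integrable setT (EFin \o f) &
      forall C, H C -> (\int[P]_(x in C) (f x)%:E = P (A `&` C))%E].

(** Conditional independence of G1 and G2 given H:
    for all A in G1, B in G2, P(A /\ B | H) = P(A | H) P(B | H) a.s.,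
    expressed via versions of the conditional probabilities (which exist and
    are unique P-a.s.). *)
Definition cond_indep (d : measure_display) (T : measurableType d)
  (R : realType) (P : probability T R) (G1 G2 H : set (set T)) : Prop :=
  forall A B, G1 A -> G2 B ->
    exists f g : T -> R,
      [/\ cond_prob_version P H A f,
          cond_prob_version P H B g &
          cond_prob_version P H (A `&` B) (fun x => f x * g x)].

(** CND of {F_i}_{i in I} w.r.t. (nu, M), with N_n' = N_n. *)
Definition CND (d : measure_display) (T : measurableType d) (R : realType)
  (P : probability T R) (I : finType) (nu : I -> {set I})
  (M F : I -> set (set T)) : Prop :=
  forall A B : {set I},
    A \subset ~: nbar nu B -> B \subset ~: nbar nu A ->
    cond_indep P (sig_join (sig_of F A) (sig_of M A))
                 (sig_join (sig_of F B) (sig_of M B))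
                 (sig_of M (nbd nu A)).

From HB Require Import structures.
From mathcomp Require Import all_boot all_order all_algebra.
From mathcomp Require Import all_classical all_reals all_analysis.
From mathcomp Require Import measurable_realfun.
Set Implicit Arguments. Unset Strict Implicit. Unset Printing Implicit Defensive.
Import Order.TTheory GRing.Theory Num.Theory.
Local Open Scope classical_set_scope.
Local Open Scope ring_scope.

(* Let D := nu'(A) \ nu(A).  Because nu is undirected, A and B :|: D are still
   separated for nu, so CND for nu makes F_A \/ M_A and F_(B :|: D) \/ M_(B :|: D)
   conditionally independent given M_nu(A).  As M_nu'(A) = M_nu(A) \/ M_D and
   both M_D and F_B \/ M_B lie inside F_(B :|: D) \/ M_(B :|: D), the weak union
   property of conditional independence concludes.
   Conditional probabilities given a sub-sigma-field are Radon-Nikodym densities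
   on that sigma-field.  For weak union, a version of P(a | Z) is shown to remain
   a version of P(a | Z \/ W) on the pi-system of the sets z `&` w, and Dynkin's
   lemma extends the defining identities to the whole of Z \/ W. *)

Section neighborhood_systems.
Variable I : finType.

Lemma nbarP (nu : I -> {set I}) (A : {set I}) x :
  reflect ((exists2 i, i \in A & x \in nu i) \/ x \in A) (x \in nbar nu A).
Proof.
rewrite /nbar inE; apply: (iffP orP) => [[/bigcupP[i iA xi]|xA]|[[i iA xi]|xA]].
- by left; exists i.
- by right.
- by left; apply/bigcupP; exists i.
- by right.
Qed.

Variables nu nu' : I -> {set I}.
Hypothesis nu_subset : forall i, nu i \subset nu' i.

Lemma nbar_subset (A : {set I}) : nbar nu A \subset nbar nu' A.
Proof.
apply/fintype.subsetP => x /nbarP[[i iA xi]|xA]; apply/nbarP; last by right.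
by left; exists i => //; exact: (fintype.subsetP (nu_subset i)).
Qed.

Lemma nbd_subset (A : {set I}) : nbd nu A \subset nbd nu' A.
Proof. exact: finset.setSD (nbar_subset A). Qed.

Lemma nbd_setUD (A : {set I}) : nbd nu A :|: (nbd nu' A :\: nbd nu A) = nbd nu' A.
Proof.
apply/setP => x; rewrite finset.in_setU finset.in_setD.
case: (boolP (x \in nbd nu A)) => //= xA.
by rewrite (fintype.subsetP (nbd_subset A)).
Qed.

Hypothesis nu_undirected : undirected nu.

(* The indices of [nbd nu' A] outside [nbd nu A] may join [B]: they are not
   [nu]-neighbors of [A] and, [nu] being undirected, [A] avoids their
   [nu]-neighborhoods. *)
Lemma separated_setU_nbdD (A B : {set I}) :
  A \subset ~: nbar nu' B -> B \subset ~: nbar nu' A ->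
  A \subset ~: nbar nu (B :|: (nbd nu' A :\: nbd nu A)) /\
  B :|: (nbd nu' A :\: nbd nu A) \subset ~: nbar nu A.
Proof.
move=> AB BA; split; apply/fintype.subsetP => x.
- move=> xA; rewrite finset.in_setC; apply/nbarP => -[[i]|];
    rewrite finset.in_setU finset.in_setD.
  + case/orP => [iB xi|/andP[iAnu]]; last first.
      rewrite /nbd finset.in_setD => /andP[iA _] xi.
      move: iAnu; rewrite /nbd finset.in_setD iA /= => /negP; apply.
      by apply/nbarP; left; exists x => //; exact: nu_undirected.
    move: (fintype.subsetP AB x xA); rewrite finset.in_setC => /negP; apply.
    by apply: (fintype.subsetP (nbar_subset B)); apply/nbarP; left; exists i.
  + case/orP => [xB|/andP[_]]; last by rewrite /nbd finset.in_setD xA.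
    move: (fintype.subsetP AB x xA); rewrite finset.in_setC => /negP; apply.
    by apply/nbarP; right.
- rewrite finset.in_setC finset.in_setU finset.in_setD.
  case/orP => [xB|/andP[xAnu]].
    apply: contra (fintype.subsetP (nbar_subset A) x) _.
    by move: (fintype.subsetP BA x xB); rewrite finset.in_setC.
  rewrite /nbd finset.in_setD => /andP[xA _].
  by move: xAnu; rewrite /nbd finset.in_setD xA.
Qed.

End neighborhood_systems.

Section generated_sigma_fields.
Context d (T : measurableType d).
Implicit Types G H K : set (set T).

Lemma smallest_measurable G : G `<=` measurable -> <<s G >> `<=` measurable.
Proof. exact: smallest_sub (@sigma_algebra_measurable _ T). Qed.

Lemma smallestI G A B : <<s G >> A -> <<s G >> B -> <<s G >> (A `&` B).
Proof. exact: (@measurableI _ (g_sigma_algebraType G)). Qed.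

Lemma smallestT G : <<s G >> [set: T].
Proof. exact: (@measurableT _ (g_sigma_algebraType G)). Qed.

Lemma smallest_setU_setI H K :
  <<s H `|` K >> = <<s [set A `&` B | A in <<s H >> & B in <<s K >>] >>.
Proof.
apply/seteqP; split; apply: smallest_sub; try exact: smallest_sigma_algebra.
- move=> A [HA|KA]; apply: sub_gen_smallest.
  + exists A; first exact: sub_gen_smallest.
    by exists [set: T]; [exact: smallestT|rewrite setIT].
  + exists [set: T]; first exact: smallestT.
    by exists A; [exact: sub_gen_smallest|rewrite setTI].
- move=> _ [A HA [B KB <-]]; apply: smallestI.
  + by apply: sub_smallest2r HA; [exact: smallest_sigma_algebra|exact: subsetUl].
  + by apply: sub_smallest2r KB; [exact: smallest_sigma_algebra|exact: subsetUr].
Qed.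

Lemma sig_join_measurable H K :
  H `<=` measurable -> K `<=` measurable -> sig_join H K `<=` measurable.
Proof. by move=> Hm Km; apply: smallest_measurable => A [/Hm|/Km]. Qed.

Lemma sig_join_subset H K H' K' :
  H `<=` H' -> K `<=` K' -> sig_join H K `<=` sig_join H' K'.
Proof.
move=> HH KK; apply: sub_smallest2r; first exact: smallest_sigma_algebra.
exact: setUSS.
Qed.

Lemma sig_join_subr H K : K `<=` sig_join H K.
Proof. by move=> A KA; apply: sub_gen_smallest; right. Qed.

Variable I : finType.
Implicit Types M : I -> set (set T).

Lemma sig_of_measurable M S :
  (forall i, M i `<=` measurable) -> sig_of M S `<=` measurable.
Proof. by move=> Mm; apply: smallest_measurable => A [i _ /Mm]. Qed.

Lemma sig_of_subset M (S S' : {set I}) :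
  S \subset S' -> sig_of M S `<=` sig_of M S'.
Proof.
move=> SS'; apply: sub_smallest2r; first exact: smallest_sigma_algebra.
by move=> A [i /= iS MiA]; exists i => //=; exact: (fintype.subsetP SS').
Qed.

Lemma sig_ofU M (S S' : {set I}) :
  sig_of M (S :|: S') = <<s \bigcup_(i in [set i | i \in S]) M i
                        `|` \bigcup_(i in [set i | i \in S']) M i >>.
Proof.
rewrite /sig_of -bigcup_setU; congr (<<s \bigcup_(i in _) _ >>).
by apply/seteqP; split => i /=; rewrite finset.in_setU => /orP.
Qed.

End generated_sigma_fields.

Section integral_mrestr.
Context d (T : measurableType d) (R : realType).
Variables (mu : {finite_measure set T -> \bar R}) (D : set T).
Hypothesis mD : measurable D.
Local Open Scope ereal_scope.

Lemma mrestr_le A : measurable A -> mrestr mu mD A <= mu A.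
Proof.
by move=> mA; apply: le_measure; rewrite ?inE//; exact: measurableI.
Qed.

Lemma mrestr_dominates : mrestr mu mD `<< mu.
Proof.
apply/null_content_dominatesP => A mA muA0.
by apply/eqP; rewrite -measure_le0 -muA0; exact: mrestr_le.
Qed.

Lemma integrable_mrestr f :
  mu.-integrable [set: T] f -> (mrestr mu mD).-integrable [set: T] f.
Proof.
move=> /integrableP[mf fi]; apply/integrableP; split => //.
apply: le_lt_trans fi; apply: ge0_le_measure_integral => //.
- exact: mrestr_le.
- exact: measurableT_comp mf.
Qed.

Lemma integral_mrestr f : mu.-integrable [set: T] f ->
  \int[mrestr mu mD]_x f x = \int[mu]_(x in D) f x.
Proof.
move=> fi; have mf := measurable_int _ fi.
rewrite -(Radon_Nikodym_change_of_variables mrestr_dominates measurableT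
  (integrable_mrestr fi)).
set rn := Radon_Nikodym _ _.
have rn_int : mu.-integrable [set: T] rn.
  exact: (@Radon_Nikodym_integrable _ _ _
    (charge_of_finite_measure (mrestr mu mD)) mu mrestr_dominates).
have mindicD : measurable_fun [set: T] (EFin \o (\1_D : T -> R)).
  by apply/measurable_EFinP; exact: measurable_indic.
have rn_indic : ae_eq mu [set: T] rn (EFin \o \1_D).
  apply: integral_ae_eq => // E _ mE.
  rewrite -Radon_Nikodym_integral; last 2 first.
  - exact: mrestr_dominates.
  - exact: mE.
  by rewrite integral_indic // setIC.
rewrite [RHS]integral_mkcond; apply: ae_eq_integral => //.
- exact: emeasurable_funM mf (measurable_int _ rn_int).
- exact/(measurable_restrictT _ mD)/measurable_funTS.
- move: rn_indic; apply: filterS => x /(_ I) /= rnx _.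
  rewrite rnx /patch indicE.
  by case: ifP => _; rewrite ?mule1 ?mule0.
Qed.

End integral_mrestr.

Lemma restrict_EFin_indic (U : Type) (R : realType) (A : set U) (f : U -> R) :
  (fun x => (f x)%:E) \_ A = (fun x => (\1_A x * f x)%:E).
Proof.
by apply/funext => x; rewrite /patch indicE; case: ifP => _; rewrite ?mul1r ?mul0r.
Qed.

Section conditional_probability.
Context d (T : measurableType d) (R : realType) (P : probability T R).
Variable G : set (set T).
Hypothesis G_measurable : G `<=` measurable.
Local Notation TH := (g_sigma_algebraType G).
Local Notation version := (cond_prob_version P <<s G >>).
Local Open Scope ereal_scope.

Let H_measurable : <<s G >> `<=` measurable := smallest_measurable G_measurable.

(* The identity of T, with the sigma-field generated by G on the target: the
   distribution [PH] of [to_sigma] is the restriction of P to that sigma-field. *)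
Definition to_sigma : T -> TH := id.

Lemma measurable_to_sigma : measurable_fun [set: T] to_sigma.
Proof. by move=> _ Y mY; rewrite setTI; exact: H_measurable. Qed.

HB.instance Definition _ :=
  isMeasurableFun.Build _ _ T TH to_sigma measurable_to_sigma.

Local Notation PH := (distribution P to_sigma).

Lemma sub_measurableP (f : T -> R) :
  sub_measurable <<s G >> f <-> measurable_fun [set: TH] f.
Proof.
split=> mf; first by move=> _ B mB; rewrite setTI; exact: mf.
by move=> B mB; have := mf measurableT B mB; rewrite setTI.
Qed.

Lemma measurable_fun_sigma d' (U : measurableType d') (f : T -> U) :
  measurable_fun [set: TH] f -> measurable_fun [set: T] f.
Proof. by move=> mf _ B mB; apply: H_measurable; exact: mf. Qed.

Lemma measurable_fun_sub_measurable (f : T -> R) :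
  sub_measurable <<s G >> f -> measurable_fun [set: T] f.
Proof. by move=> /sub_measurableP; exact: measurable_fun_sigma. Qed.

Lemma integral_to_sigma (F : T -> \bar R) (C : set T) :
  <<s G >> C -> measurable_fun [set: TH] F ->
  \int[PH]_(x in C) F x = \int[P]_(x in C) F x.
Proof.
move=> mC mF; rewrite integralE [RHS]integralE /distribution.
rewrite !ge0_integral_pushforward //.
- exact: measurable_funTS (measurable_funeneg mF).
- exact: measurable_funTS (measurable_funepos mF).
Qed.

Lemma integrable_to_sigma (F : T -> \bar R) : measurable_fun [set: TH] F ->
  PH.-integrable [set: TH] F -> P.-integrable [set: T] F.
Proof.
move=> mF /integrableP[_ iF]; apply/integrableP.
split; first exact: measurable_fun_sigma.
rewrite -integral_to_sigma //; first exact: smallestT.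
exact: measurableT_comp mF.
Qed.

Lemma ae_to_sigma (Q : T -> Prop) :
  (\forall x \ae PH, Q x) -> \forall x \ae P, Q x.
Proof. by case=> N [mN N0 QN]; exists N; split => //; exact: H_measurable. Qed.

Lemma integral_sigma_ae_eq (F1 F2 : T -> \bar R) :
  measurable_fun [set: TH] F1 -> measurable_fun [set: TH] F2 ->
  P.-integrable [set: T] F1 ->
  (forall C, <<s G >> C -> \int[P]_(x in C) F1 x = \int[P]_(x in C) F2 x) ->
  ae_eq PH [set: TH] F1 F2.
Proof.
move=> mF1 mF2 iF1 F12.
apply: (@integral_ae_eq _ _ _ PH [set: TH] measurableT F2 F1) => //.
- exact: (integrable_pushforward measurable_to_sigma mF1 iF1 measurableT).
- by move=> E _ mE; rewrite !integral_to_sigma //; exact: F12.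
Qed.

Lemma cond_prob_version_measurable b g :
  version b g -> measurable_fun [set: TH] (EFin \o g).
Proof. by case=> /sub_measurableP mg _ _; exact: measurableT_comp mg. Qed.

Lemma cond_prob_version_ae_eq b g1 g2 : version b g1 -> version b g2 ->
  ae_eq P [set: T] (EFin \o g1) (EFin \o g2).
Proof.
move=> vg1 vg2; apply: ae_to_sigma.
apply: integral_sigma_ae_eq.
- exact: cond_prob_version_measurable vg1.
- exact: cond_prob_version_measurable vg2.
- by case: vg1.
- by move=> C HC; case: vg1 => _ _ ->//; case: vg2 => _ _ ->.
Qed.

Section restriction.
Variables (b : set T) (mb : measurable b).

(* [P (. `&` b)] as a finite measure on the sigma-field generated by [G]; its
   density with respect to [P] on that sigma-field is [P (b | <<s G >>)]. *)
Definition restr_sigma : set TH -> \bar R := pushforward (mrestr P mb) to_sigma.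

Let restr_sigma0 : restr_sigma set0 = 0.
Proof. by rewrite /restr_sigma /pushforward /mrestr set0I measure0. Qed.

Let restr_sigma_ge0 C : 0 <= restr_sigma C.
Proof. exact: measure_ge0. Qed.

Let restr_sigma_sigma_additive : semi_sigma_additive restr_sigma.
Proof.
exact: (@measure_semi_sigma_additive _ _ _ (pushforward (mrestr P mb) to_sigma)).
Qed.

HB.instance Definition _ := isMeasure.Build _ _ _ restr_sigma
  restr_sigma0 restr_sigma_ge0 restr_sigma_sigma_additive.

Let restr_sigma_fin_num : fin_num_fun restr_sigma.
Proof. by move=> C mC; exact: (fin_num_measure (mrestr P mb) _ (H_measurable mC)). Qed.

HB.instance Definition _ :=
  Measure_isFinite.Build _ _ _ restr_sigma restr_sigma_fin_num.

Lemma restr_sigma_dominates : restr_sigma `<< PH.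
Proof.
apply/null_content_dominatesP => C mC PC0; apply/eqP.
by rewrite -measure_le0 -PC0; exact: (mrestr_le P mb (H_measurable mC)).
Qed.

Let rn := Radon_Nikodym_SigmaFinite.f restr_sigma PH.

Let rn_ge0 x : 0 <= rn x.
Proof. exact: Radon_Nikodym_SigmaFinite.f_ge0 restr_sigma_dominates x. Qed.

Let rn_integrable : PH.-integrable [set: TH] rn.
Proof. exact: Radon_Nikodym_SigmaFinite.f_integrable restr_sigma_dominates. Qed.

Let measurable_rn : measurable_fun [set: TH] rn.
Proof. exact: measurable_int rn_integrable. Qed.

Let integral_rn C : <<s G >> C -> \int[P]_(x in C) rn x = P (b `&` C).
Proof.
move=> HC; rewrite -integral_to_sigma // setIC.
by rewrite -(Radon_Nikodym_SigmaFinite.f_integral restr_sigma_dominates).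
Qed.

Lemma cond_prob_version_exists : exists g, version b g.
Proof.
have rnE : EFin \o (fine \o rn) = rn.
  apply/funext => x /=; rewrite fineK //.
  exact: Radon_Nikodym_SigmaFinite.f_fin_num restr_sigma_dominates x.
exists (fine \o rn); split.
- apply/sub_measurableP.
  exact: measurableT_comp (fine_measurable measurableT) measurable_rn.
- by rewrite rnE; exact: integrable_to_sigma.
- by move=> C HC; rewrite -integral_rn // -rnE.
Qed.

Lemma cond_prob_version_ge0 g : version b g -> \forall x \ae P, (0 <= g x)%R.
Proof.
move=> vg; have [_ ig gE] := vg.
have /ae_to_sigma : ae_eq PH [set: TH] (EFin \o g) rn.
  apply: integral_sigma_ae_eq => //; first exact: cond_prob_version_measurable vg.
  by move=> C HC; rewrite gE // integral_rn.
apply: (@filterS _ _ (ae_filter_ringOfSetsType P)) => x /(_ I) /= gx.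
by rewrite -lee_fin gx.
Qed.

End restriction.

(* g is PH-a.e. the Radon-Nikodym density of [restr_sigma], so the change of
   variables formula turns the left-hand side into an integral against
   P (. `&` b). *)
Lemma integral_mul_cond_prob b g h : measurable b -> version b g ->
  sub_measurable <<s G >> h -> P.-integrable [set: T] (EFin \o h) ->
  \int[P]_x ((h x * g x)%R)%:E = \int[P]_(x in b) (h x)%:E.
Proof.
move=> mb vg /sub_measurableP mh ih.
have mhE : measurable_fun [set: TH] (EFin \o h) by apply/measurable_EFinP.
have mg : measurable_fun [set: TH] g by case: vg => /sub_measurableP.
pose rn := Radon_Nikodym (charge_of_finite_measure (restr_sigma mb)) PH.
have rn_int : PH.-integrable [set: TH] rn.
  exact: (@Radon_Nikodym_integrable _ _ _
    (charge_of_finite_measure (restr_sigma mb)) PH (restr_sigma_dominates mb)).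
have mrn : measurable_fun [set: TH] rn := measurable_int _ rn_int.
have g_rn : ae_eq PH [set: TH] (EFin \o g) rn.
  apply: integral_sigma_ae_eq => //; first exact: cond_prob_version_measurable vg.
    by case: vg.
  move=> C HC; have [_ _ ->//] := vg; rewrite -integral_to_sigma //.
  rewrite -Radon_Nikodym_integral; last 2 first.
  - exact: restr_sigma_dominates.
  - exact: HC.
  by rewrite /= /restr_sigma /pushforward /mrestr setIC.
rewrite -integral_to_sigma; first last.
- by apply/measurable_EFinP; exact: measurable_funM.
- exact: smallestT.
transitivity (\int[PH]_(x in [set: TH]) ((h x)%:E * rn x)).
  apply: ae_eq_integral => //.
  - by apply/measurable_EFinP; exact: measurable_funM.
  - exact: emeasurable_funM.
  - by apply: filterS g_rn => x /(_ I) /= <-.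
have ih_restr : (restr_sigma mb).-integrable [set: TH] (EFin \o h).
  exact: (integrable_pushforward measurable_to_sigma mhE
    (integrable_mrestr mb ih) measurableT).
rewrite Radon_Nikodym_change_of_variables //; last exact: restr_sigma_dominates.
rewrite integral_pushforward // ?preimage_setT; last exact: integrable_mrestr.
exact: (integral_mrestr mb ih).
Qed.

Lemma cond_prob_version_setC b g : measurable b -> version b g ->
  version (~` b) (fun x => 1 - g x)%R.
Proof.
move=> mb vg; have [/sub_measurableP mg ig gE] := vg.
have i1 C : measurable C -> P.-integrable C (EFin \o cst 1%R).
  exact: finite_measure_integrable_cst.
split.
- by apply/sub_measurableP; apply: measurable_funB.
- rewrite (_ : EFin \o _ = (EFin \o cst 1%R) \- (EFin \o g)).
    exact: integrableB (i1 _ measurableT) ig.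
  by apply/funext => x; rewrite /= EFinB.
- move=> C HC; have mC := H_measurable HC.
  under eq_integral do rewrite EFinB.
  rewrite integralB //; [|exact: i1|exact: integrableS ig].
  rewrite (integral_cst P mC) mul1e gE // (setIC (~` b)) -setDE measureD //.
    by rewrite setIC.
  exact: le_lt_trans (probability_le1 _ mC) (ltry _).
Qed.

Lemma cond_prob_version_ae01 b g : measurable b -> version b g ->
  \forall x \ae P, (0 <= g x <= 1)%R.
Proof.
move=> mb vg; apply: filterS2 (cond_prob_version_ge0 mb vg)
  (cond_prob_version_ge0 (measurableC mb) (cond_prob_version_setC mb vg)).
by move=> x -> /=; rewrite subr_ge0.
Qed.

Lemma cond_prob_version_exists01 b : measurable b ->
  exists g, version b g /\ forall x, (0 <= g x <= 1)%R.
Proof.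
move=> mb; have [g vg] := cond_prob_version_exists mb.
have [/sub_measurableP mg _ gE] := vg.
pose c := (cst 0%R) \max (g \min cst 1%R).
have c01 x : (0 <= c x <= 1)%R.
  by rewrite /c /= le_max lexx ge_max ler01 ge_min lexx orbT.
have mc : measurable_fun [set: TH] c.
  by apply: measurable_maxr => //; exact: measurable_minr.
exists c; split => //; split.
- exact/sub_measurableP.
- apply: (@le_integrable _ _ _ _ _ measurableT _ (EFin \o cst 1%R)).
  + by apply/measurable_EFinP; exact: measurable_fun_sigma.
  + by move=> x _; have /andP[c0 c1] := c01 x; rewrite /= lee_fin !ger0_norm.
  + exact: finite_measure_integrable_cst.
- move=> C HC; rewrite -gE //; apply: ae_eq_integral; first exact: H_measurable.
  + by apply: measurable_funTS; apply/measurable_EFinP; exact: measurable_fun_sigma.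
  + by apply: measurable_funTS; apply/measurable_EFinP; exact: measurable_fun_sigma.
  + apply: filterS (cond_prob_version_ae01 mb vg) => x /andP[g0 g1] _.
    by rewrite /c /= min_l // max_r.
Qed.

Lemma cond_prob_version_pi a f : measurable a ->
  setI_closed G -> G [set: T] ->
  sub_measurable <<s G >> f -> P.-integrable [set: T] (EFin \o f) ->
  (forall C, G C -> \int[P]_(x in C) (f x)%:E = P (a `&` C)) ->
  version a f.
Proof.
move=> ma GI GT mf fi fG; split => //.
have mfT : measurable_fun [set: T] (EFin \o f) := measurable_int _ fi.
have fT : \int[P]_x (f x)%:E = P a by rewrite -[a in RHS]setIT; exact: fG.
apply: (@dynkin_induction _ TH G
  (fun C : set TH => \int[P]_(x in C) (f x)%:E = P (a `&` C))) => //.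
- by rewrite setIT.
- move=> C HC fC; have mC := H_measurable HC.
  have fCC : P a = P (a `&` C) + \int[P]_(x in ~` C) (f x)%:E.
    rewrite -fT -fC -integral_setU //; first by rewrite setUv.
    - exact: measurableC.
    - exact: measurable_funTS.
    - by rewrite /disj_set setICr.
  rewrite -setDE measureD //; last exact: le_lt_trans (probability_le1 _ ma) (ltry _).
  rewrite [X in X - _]fCC [P _ + _]addeC; apply/esym/addeK.
  by apply: fin_num_measure; exact: measurableI.
- move=> F HF tF fF; have mF n := H_measurable (HF n).
  rewrite integral_bigcup //; last by apply: integrableS fi => //; exact: bigcupT_measurable.
  rewrite setI_bigcupr measure_bigcup //.
  + rewrite [RHS](eq_eseriesl _ _ (Q := xpredT)); last by move=> n; rewrite in_setT.
    by apply: eq_eseriesr => n _; exact: fF.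
  + by move=> n _; exact: measurableI.
  + exact: trivIset_setIl.
Qed.

Lemma integral_setI_cond_prob b g f C : measurable b -> version b g ->
  <<s G >> C -> sub_measurable <<s G >> f -> P.-integrable [set: T] (EFin \o f) ->
  \int[P]_(x in C) ((f x * g x)%R)%:E = \int[P]_(x in C `&` b) (f x)%:E.
Proof.
move=> mb vg HC /sub_measurableP mf fi.
pose h x := (\1_C x * f x)%R.
have mh : measurable_fun [set: TH] h.
  by apply: measurable_funM => //; exact: measurable_indic.
have hi : P.-integrable [set: T] (EFin \o h).
  apply: (le_integrable measurableT _ _ fi).
    by apply/measurable_EFinP; exact: measurable_fun_sigma mh.
  move=> x _; rewrite /= lee_fin /h normrM indicE.
  by case: (x \in C); rewrite ?normr1 ?normr0 ?mul1r ?mul0r.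
rewrite integral_mkcond integral_mkcondl !restrict_EFin_indic.
rewrite -(integral_mul_cond_prob mb vg (proj2 (sub_measurableP h) mh) hi).
by apply: eq_integral => x _; rewrite mulrA.
Qed.

End conditional_probability.

Section weak_union.
Context d (T : measurableType d) (R : realType) (P : probability T R).
Variables G1 G2 G2' Gz Gw : set (set T).
Hypotheses (G1_measurable : G1 `<=` measurable) (G2'_measurable : G2' `<=` measurable).
Hypotheses (Gz_measurable : Gz `<=` measurable) (Gw_measurable : Gw `<=` measurable).
Hypotheses (G2'I : setI_closed G2') (G2G2' : G2 `<=` G2') (GwG2' : <<s Gw >> `<=` G2').
Hypothesis G1_indep_G2' : cond_indep P G1 G2' <<s Gz >>.
Local Open Scope ereal_scope.

Lemma integral_cond_indep a fa y z :
  G1 a -> cond_prob_version P <<s Gz >> a fa -> G2' y -> <<s Gz >> z ->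
  \int[P]_(x in z `&` y) (fa x)%:E = P (a `&` (z `&` y)).
Proof.
move=> G1a vfa G2'y Hz; have my := G2'_measurable G2'y.
have [f [g [vf vg vfg]]] := G1_indep_G2' G1a G2'y.
have [mfa ifa _] := vfa; have [mf _ _] := vf.
rewrite -(integral_setI_cond_prob Gz_measurable my vg Hz mfa ifa).
transitivity (\int[P]_(x in z) ((f x * g x)%R)%:E); last first.
  by have [_ _ -> //] := vfg; rewrite -setIA [y `&` z]setIC.
have [mg _ _] := vg.
have mfT := measurable_fun_sub_measurable Gz_measurable mf.
have mfaT := measurable_fun_sub_measurable Gz_measurable mfa.
have mgT := measurable_fun_sub_measurable Gz_measurable mg.
have mz := smallest_measurable Gz_measurable Hz.
apply: ae_eq_integral => //.
- by apply: measurable_funTS; apply/measurable_EFinP; exact: measurable_funM.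
- by apply: measurable_funTS; apply/measurable_EFinP; exact: measurable_funM.
- by apply: filterS (cond_prob_version_ae_eq Gz_measurable vfa vf) => x /(_ I) [->].
Qed.

Lemma cond_indep_weak_union : cond_indep P G1 G2 <<s Gz `|` Gw >>.
Proof.
rewrite smallest_setU_setI; set Gzw := [set _ | _ in _ & _ in _].
have Gzw_measurable : Gzw `<=` measurable.
  move=> _ [A HA [B HB <-]]; apply: measurableI.
  - exact: (smallest_measurable Gz_measurable).
  - exact: (smallest_measurable Gw_measurable).
have Gzw_setI : setI_closed Gzw.
  move=> _ _ [A1 HA1 [B1 HB1 <-]] [A2 HA2 [B2 HB2 <-]].
  exists (A1 `&` A2); first exact: smallestI.
  by exists (B1 `&` B2); [exact: smallestI|rewrite setIACA].
have Gzw_setT : Gzw [set: T].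
  by exists [set: T]; [exact: smallestT|exists [set: T]; [exact: smallestT|rewrite setIT]].
have Gz_Gzw : <<s Gz >> `<=` <<s Gzw >>.
  move=> A HA; apply: sub_gen_smallest; exists A => //.
  by exists [set: T]; [exact: smallestT|rewrite setIT].
move=> a b G1a G2b; have ma := G1_measurable G1a.
have G2'b := G2G2' G2b; have mb := G2'_measurable G2'b.
have [fa vfa] := cond_prob_version_exists P Gz_measurable ma.
have [mfa ifa _] := vfa.
have vfa' : cond_prob_version P <<s Gzw >> a fa.
  apply: cond_prob_version_pi => //.
    by move=> B mB; apply: Gz_Gzw; exact: mfa.
  by move=> _ [z Hz [w Hw <-]]; exact: integral_cond_indep (GwG2' Hw) Hz.
have [g [vg g01]] := cond_prob_version_exists01 P Gzw_measurable mb.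
exists fa, g; split => //.
have [/sub_measurableP mfa' _ _] := vfa'; have [/sub_measurableP mg _ _] := vg.
apply: cond_prob_version_pi => //.
- exact: measurableI.
- by apply/sub_measurableP; exact: measurable_funM.
- apply: (le_integrable measurableT _ _ ifa).
    apply/measurable_EFinP; apply: (measurable_fun_sigma Gzw_measurable).
    exact: measurable_funM.
  move=> x _; rewrite /= lee_fin normrM ler_piMr //.
  by have /andP[g0 g1] := g01 x; rewrite ger0_norm.
- move=> _ [z Hz [w Hw <-]].
  have HGzw : <<s Gzw >> (z `&` w) by apply: sub_gen_smallest; exists z => //; exists w.
  rewrite (integral_setI_cond_prob Gzw_measurable mb vg HGzw) //; last first.
    exact/sub_measurableP.
  rewrite -setIA (integral_cond_indep G1a vfa) //; last exact: G2'I (GwG2' Hw) G2'b.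
  by congr (P _); apply/seteqP; split => x /=; tauto.
Qed.

End weak_union.

Theorem lemma2p1 (d : measure_display) (T : measurableType d) (R : realType)
  (P : probability T R) (I : finType) (nu nu' : I -> {set I})
  (M F : I -> set (set T)) :
  nbhd_system nu -> nbhd_system nu' ->
  (forall i, nu i \subset nu' i) ->
  undirected nu ->
  (forall i, sub_sigma (F i)) ->
  (forall i, sub_sigma (M i)) ->
  CND P nu M F -> CND P nu' M F.
Proof.
move=> _ _ nu_nu' nu_undirected F_sigma M_sigma nu_CND A B A_B B_A.
have Fm i : F i `<=` measurable := (F_sigma i).2.
have Mm i : M i `<=` measurable := (M_sigma i).2.
set D := nbd nu' A :\: nbd nu A.
have [A_BD BD_A] := separated_setU_nbdD nu_nu' nu_undirected A_B B_A.
rewrite -(nbd_setUD nu_nu' A) sig_ofU.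
apply: (cond_indep_weak_union
  (G2' := sig_join (sig_of F (B :|: D)) (sig_of M (B :|: D)))).
- by apply: sig_join_measurable; exact: sig_of_measurable.
- by apply: sig_join_measurable; exact: sig_of_measurable.
- by move=> C [i _ /Mm].
- by move=> C [i _ /Mm].
- exact: smallestI.
- by apply: sig_join_subset; apply: sig_of_subset; exact: finset.subsetUl.
- move=> C /(sig_of_subset (finset.subsetUr B D)); apply: sig_join_subr.
- exact: nu_CND A_BD BD_A.
Qed.
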